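(* Let $c>0$ and consider the function $$F(L,L_2)=\frac{L^3L_2(3L+2L_2)}{(2L+L_2)^4}$$ on the set $\{(L,L_2): L>0,\ L_2>0,\ 2L+L_2=c\}$. Then $F$ has a unique maximizer on this set, given by $$L^*=c\Bigl(1-\sqrt{\tfrac{2}{5}}\Bigr),\qquad L_2^*=c\Bigl(2\sqrt{\tfrac{2}{5}}-1\Bigr),$$ so that the optimal ratio is $\dfrac{L_2^*}{L^*}=\dfrac{\sqrt{10}-1}{3}\approx 0.721$.
   Context: This concerns Purcell's three-link swimmer: a planar swimmer made of three rigid segments joined end to end, with two outer links of length $L$ and a central link of length $L_2$, total length $2L+L_2=c$. In the paper, $F(L,L_2)$ multiplied by $\frac{\eta-\xi}{\xi}$ (with $\xi,\eta$ the tangential and normal drag coefficients of Resistive Force Theory) is the $x$-component of the Lie bracket $[\mathbf g_1,\mathbf g_2]$ of the swimmer's control vector fields at the straight configuration, which is the leading-order coefficient of the $x$-displacement produced by a small stroke (closed curve in the joint-angle plane); maximizing $F$ under the fixed total length constraint yields the optimal link-length ratio. *)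

From mathcomp Require Import all_boot all_order all_algebra.
Set Implicit Arguments. Unset Strict Implicit. Unset Printing Implicit Defensive.
Import Order.TTheory GRing.Theory Num.Theory.
Local Open Scope ring_scope.

Definition purcellF (R : rcfType) (L L2 : R) : R :=
  L ^+ 3 * L2 * (3 * L + 2 * L2) / (2 * L + L2) ^+ 4.

Definition admissible (R : rcfType) (c L L2 : R) : Prop :=
  0 < L /\ 0 < L2 /\ 2 * L + L2 = c.

(** Since [F] is homogeneous of degree one, on the segment [2L + L2 = c] it
    equals [c g(t)] with [t = L/c] ranging over [(0, 1/2)] and
    [g(t) = t^3 (1 - 2t) (2 - t) = 2t^3 - 5t^4 + 2t^5].  Now
    [g'(t) = 2t^2 (5t^2 - 10t + 3)] vanishes in [(0, 1/2)] only at
    [a = 1 - sqrt(2/5)], and there [g(t) - g(a) = (t - a)^2 q(t)] with a cubic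
    [q] that is negative on [(0, 1)]; hence [a] is the unique maximiser. *)
From mathcomp Require Import all_boot all_order all_algebra.
From mathcomp Require Import ring lra.
Import Order.TTheory GRing.Theory Num.Theory.
Set Implicit Arguments. Unset Strict Implicit.
Local Open Scope ring_scope.

Section PurcellProfile.

Variable R : rcfType.

Definition purcell_profile (t : R) : R := 2 * t ^+ 3 - 5 * t ^+ 4 + 2 * t ^+ 5.

Definition critical_poly (a : R) : R := 5 * a ^+ 2 - 10 * a + 3.

Definition profile_gap (a t : R) : R :=
  2 * t ^+ 3 + (4 * a - 5) * t ^+ 2 + (2 * a - 8 / 5) * t + (6 * a - 3) / 5.

Lemma purcellF_homogeneous (L L2 : R) : 2 * L + L2 != 0 ->
  purcellF L L2 = (2 * L + L2) * purcell_profile (L / (2 * L + L2)).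
Proof.
move=> c0; rewrite /purcellF /purcell_profile.
set c := 2 * L + L2 in c0 *.
have -> : L2 = c - 2 * L by rewrite /c; ring.
by field.
Qed.

Lemma purcellF_admissible (c L L2 : R) : admissible c L L2 ->
  purcellF L L2 = c * purcell_profile (L / c).
Proof.
move=> [hL [hL2 <-]]; apply: purcellF_homogeneous.
by rewrite gt_eqF // addr_gt0 // mulr_gt0.
Qed.

Lemma admissible_ratio (c L L2 : R) : admissible c L L2 -> 0 < L / c < 1 / 2.
Proof.
move=> [hL [hL2 <-]]; have c_gt0 : 0 < 2 * L + L2 by lra.
by rewrite divr_gt0 //= ltr_pdivrMr //; lra.
Qed.

Lemma purcell_profile_sub (a t : R) : critical_poly a = 0 ->
  purcell_profile t - purcell_profile a = (t - a) ^+ 2 * profile_gap a t.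
Proof.
move=> pa; apply/subr0_eq.
(* The first-order Taylor term [(t - a) g'(a)] has [g'(a) = 2 a^2 critical_poly a];
   the rest comes from reducing the Taylor quotient modulo [critical_poly a]. *)
have -> : purcell_profile t - purcell_profile a - (t - a) ^+ 2 * profile_gap a t
    = critical_poly a * ((t - a) * 2 * a ^+ 2
                         + (t - a) ^+ 2 * (6 / 5 * t + (8 * a + 1) / 5)).
  by rewrite /purcell_profile /profile_gap /critical_poly; field.
by rewrite pa mul0r.
Qed.

Lemma profile_gap_lt0 (a t : R) : a < 1 / 2 -> 0 < t -> t < 1 -> profile_gap a t < 0.
Proof.
move=> ha t_gt0 t_lt1; rewrite /profile_gap.
have t2_gt0 : 0 < t ^+ 2 by rewrite exprn_gt0.
have cubic : t ^+ 3 = t * t ^+ 2 by rewrite exprS.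
nra.
Qed.

Lemma purcell_profile_lt_crit (a t : R) : critical_poly a = 0 -> a < 1 / 2 ->
  0 < t -> t < 1 -> t != a -> purcell_profile t < purcell_profile a.
Proof.
move=> pa ha t_gt0 t_lt1 neq_ta.
rewrite -subr_lt0 purcell_profile_sub // pmulr_rlt0 ?profile_gap_lt0 //.
by rewrite exprn_even_gt0 // subr_eq0.
Qed.

Lemma purcellF_lt_crit (c a L L2 : R) : critical_poly a = 0 -> a < 1 / 2 ->
  admissible c L L2 -> L / c != a -> purcellF L L2 < c * purcell_profile a.
Proof.
move=> pa ha adm neq; have /andP[t_gt0 t_lt] := admissible_ratio adm.
have c_gt0 : 0 < c by case: adm => hL [hL2 <-]; lra.
by rewrite (purcellF_admissible adm) ltr_pM2l // purcell_profile_lt_crit //; lra.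
Qed.

End PurcellProfile.

Lemma sqrt2_5_bounds (R : rcfType) : 1 / 2 < Num.sqrt (2 / 5 : R) < 1.
Proof.
have s2 : Num.sqrt (2 / 5 : R) ^+ 2 = 2 / 5 by rewrite sqr_sqrtr //; lra.
have s_ge0 : 0 <= Num.sqrt (2 / 5 : R) by rewrite sqrtr_ge0.
apply/andP; split; nra.
Qed.

Lemma sqrt10_eq (R : rcfType) : Num.sqrt (10 : R) = 5 * Num.sqrt (2 / 5).
Proof.
have -> : (10 : R) = 25 * (2 / 5) by field.
by rewrite sqrtrM // (_ : 25 = 5 ^+ 2) ?sqrtr_sqr ?ger0_norm //; lra.
Qed.

Lemma purcell_opt_ratio (R : rcfType) (c s : R) : c != 0 -> s ^+ 2 = 2 / 5 ->
  s != 1 -> c * (2 * s - 1) / (c * (1 - s)) = (5 * s - 1) / 3.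
Proof.
move=> c0 s2 s1; have opt_neq0 : c * (1 - s) != 0 by rewrite mulf_neq0 // subr_eq0 eq_sym.
apply/eqP; rewrite eqr_div ?pnatr_eq0 // -subr_eq0.
have -> : c * (2 * s - 1) * 3 - (5 * s - 1) * (c * (1 - s)) = c * (5 * s ^+ 2 - 2).
  by ring.
by rewrite s2 (_ : 5 * (2 / 5) - 2 = 0 :> R) ?mulr0 //; field.
Qed.

Theorem mainTheorem1 (R : rcfType) (c : R) (hc : 0 < c) :
  let Ls := c * (1 - Num.sqrt (2 / 5)) in
  let L2s := c * (2 * Num.sqrt (2 / 5) - 1) in
  [/\ admissible c Ls L2s,
      (forall L L2 : R, admissible c L L2 ->
         purcellF L L2 <= purcellF Ls L2s),
      (forall L L2 : R, admissible c L L2 ->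
         purcellF L L2 = purcellF Ls L2s -> L = Ls /\ L2 = L2s)
    & L2s / Ls = (Num.sqrt 10 - 1) / 3].
Proof.
move=> Ls L2s; have /andP[s_gt s_lt] := sqrt2_5_bounds R.
set s := Num.sqrt (2 / 5) in Ls L2s s_gt s_lt *.
have s2 : s ^+ 2 = 2 / 5 by rewrite sqr_sqrtr //; lra.
have pa : critical_poly (1 - s) = 0 by rewrite /critical_poly; nra.
have adm : admissible c Ls L2s.
  by split; [|split]; rewrite /Ls /L2s; [rewrite mulr_gt0 //; lra
    | rewrite mulr_gt0 //; lra | ring].
have FS : purcellF Ls L2s = c * purcell_profile (1 - s).
  by rewrite (purcellF_admissible adm) /Ls mulrAC divff ?mul1r ?gt_eqF.
have lt_opt L L2 : admissible c L L2 -> L / c != 1 - s -> purcellF L L2 < purcellF Ls L2s.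
  by rewrite FS; apply: purcellF_lt_crit => //; lra.
split=> // [L L2 hA | L L2 hA E |].
- have [tL|/(lt_opt _ _ hA)/ltW //] := eqVneq (L / c) (1 - s).
  by rewrite FS (purcellF_admissible hA) tL.
- have [tL|/(lt_opt _ _ hA)] := eqVneq (L / c) (1 - s); last by rewrite E ltxx.
  have eL : L = Ls by rewrite /Ls -tL mulrC divfK ?gt_eqF.
  by case: hA => _ [_ e]; split=> //; rewrite /L2s; subst L; rewrite /Ls in e; lra.
- by rewrite sqrt10_eq -/s /L2s /Ls purcell_opt_ratio ?(gt_eqF hc) ?(lt_eqF s_lt).
Qed.
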